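(* Let $I$ be a finite set of players. For each $\nu\in I$ let $X_\nu\subset\mathbb{R}^{n_\nu}$, let $\succeq_\nu$ be a binary relation on $\mathbb{R}^n=\prod_{\nu\in I}\mathbb{R}^{n_\nu}$, and let $K_\nu:X_{-\nu}\rightrightarrows X_\nu$ be a set-valued map, where $X_{-\nu}=\prod_{j\neq\nu}X_j$. Set $X=\prod_{\nu\in I}X_\nu$ and $K(x)=\prod_{\nu\in I}K_\nu(x^{-\nu})$ for $x\in X$. Assume that for each $\nu\in I$: (1) $K_\nu$ has non-empty values; (2) $U^s_\nu(x)$ is open for all $x\in\mathbb{R}^n$. Define $N_0:\mathbb{R}^n\rightrightarrows\mathbb{R}^n$ by $N_0(x)=\prod_{\nu\in I}\big(N_\nu(x)\setminus\{0\}\big)$, where $0$ denotes the zero vector of $\mathbb{R}^{n_\nu}$. If $\hat x\in X$ is a solution of the Stampacchia quasivariational inequality problem associated to $N_0$ and $K$, i.e. $\hat x\in K(\hat x)$ and there exists $\hat x^*\in N_0(\hat x)$ with $\langle \hat x^*,y-\hat x\rangle\ge 0$ for all $y\in K(\hat x)$, then $\hat x$ is a generalized Nash equilibrium.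
   Context: Vectors $x\in\mathbb{R}^n$ are written $x=(x^\nu,x^{-\nu})$ with $x^\nu\in\mathbb{R}^{n_\nu}$ and $x^{-\nu}$ the components of the other players. For $w^{-\nu}$, the induced relation on $\mathbb{R}^{n_\nu}$ is $x^\nu\succeq_{\nu,w^{-\nu}}y^\nu$ iff $(x^\nu,w^{-\nu})\succeq_\nu(y^\nu,w^{-\nu})$, and $\succ_{\nu,w^{-\nu}}$ denotes its asymmetric part ($a\succ b$ iff $a\succeq b$ and not $b\succeq a$). For $x\in\mathbb{R}^n$, $U^s_\nu(x)=\{y^\nu\in\mathbb{R}^{n_\nu}: y^\nu\succ_{\nu,x^{-\nu}}x^\nu\}$. For $A\subset\mathbb{R}^m$ and $z\in\mathbb{R}^m$ (no convexity, closedness or membership $z\in A$ required), the normal cone is $\mathscr{N}_A(z)=\{z^*\in\mathbb{R}^m:\langle z^*,y-z\rangle\le 0\ \forall y\in A\}$ if $A\neq\emptyset$ and $\mathscr{N}_A(z)=\mathbb{R}^m$ if $A=\emptyset$. Then $N_\nu(x)=\mathscr{N}_{U^s_\nu(x)}(x^\nu)\subset\mathbb{R}^{n_\nu}$. A point $\hat x\in K(\hat x)$ is a generalized Nash equilibrium if for each $\nu\in I$ there is no $x^\nu\in K_\nu(\hat x^{-\nu})$ with $x^\nu\succ_{\nu,\hat x^{-\nu}}\hat x^\nu$. *)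

From HB Require Import structures.
From mathcomp Require Import all_boot all_order all_algebra.
From mathcomp Require Import all_classical all_reals all_analysis.
Unset Printing Implicit Defensive.
Import Order.TTheory GRing.Theory Num.Theory.
Import numFieldNormedType.Exports.
Local Open Scope ring_scope.
Local Open Scope classical_set_scope.

Section GNEP.
Variables (R : realType) (I : finType) (n : I -> nat).

Definition vec (nu : I) := 'rV[R]_(n nu).
Definition profile := forall nu : I, vec nu.

Definition ip (k : nat) (u v : 'rV[R]_k) : R := \sum_(i < k) u 0 i * v 0 i.

Definition ipP (u v : profile) : R := \sum_(nu : I) @ip (n nu) (u nu) (v nu).

Definition upd (x : profile) (nu : I) (y : vec nu) : profile :=
  @dfwith I vec x nu y.

Definition strict (T : Type) (pref : T -> T -> Prop) (a b : T) : Prop :=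
  pref a b /\ ~ pref b a.

Definition Us (pref : I -> profile -> profile -> Prop) (nu : I) (x : profile)
  : set (vec nu) :=
  [set y | strict _ (pref nu) (upd x nu y) x].

(* normal cone (no convexity / membership required); equals R^k when A is empty *)
Definition ncone (k : nat) (A : set 'rV[R]_k) (z : 'rV[R]_k) : set 'rV[R]_k :=
  [set zs | A = set0 \/ (forall y, A y -> @ip k zs (y - z) <= 0)].

Definition Nnu (pref : I -> profile -> profile -> Prop) (nu : I) (x : profile)
  : set (vec nu) := @ncone (n nu) (Us pref nu x) (x nu).

Definition N0 (pref : I -> profile -> profile -> Prop) (x : profile) : set profile :=
  [set xs | forall nu, Nnu pref nu x (xs nu) /\ xs nu <> 0].

(* K(x) = prod_nu K_nu(x^{-nu}); K_nu is given as a function of the full profile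
   that depends only on x^{-nu} (see hypothesis in the theorem) *)
Definition Kprod (K : forall nu : I, profile -> set (vec nu)) (x : profile)
  : set profile := [set y | forall nu, K nu x (y nu)].

Definition inX (X : forall nu : I, set (vec nu)) : set profile :=
  [set x | forall nu, X nu (x nu)].

Definition inXminus (X : forall nu : I, set (vec nu)) (nu : I) (x : profile) :=
  forall j, j != nu -> X j (x j).

Definition SQVI (pref : I -> profile -> profile -> Prop)
  (K : forall nu : I, profile -> set (vec nu)) (xh : profile) : Prop :=
  Kprod K xh xh /\
  exists xs, N0 pref xh xs /\ (forall y, Kprod K xh y -> 0 <= ipP xs (fun nu => y nu - xh nu)).

Definition GNE (pref : I -> profile -> profile -> Prop)
  (K : forall nu : I, profile -> set (vec nu)) (xh : profile) : Prop :=
  Kprod K xh xh /\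
  forall nu, ~ exists y : vec nu, K nu xh y /\ strict _ (pref nu) (upd xh nu y) xh.

End GNEP.
Arguments ip {R k}.
Arguments ipP {R I n}.
Arguments strict {T}.
Arguments ncone {R k}.
Arguments upd {R I n}.
Arguments Us {R I n}.
Arguments Nnu {R I n}.
Arguments N0 {R I n}.
Arguments Kprod {R I n}.
Arguments inX {R I n}.
Arguments inXminus {R I n}.
Arguments SQVI {R I n}.
Arguments GNE {R I n}.

(* If player nu had a strict improvement y in K_nu, then y lies in the open
   set U^s_nu(xh), so y + t xs^nu stays in it for small t > 0.  As xs^nu is a
   nonzero normal vector to U^s_nu(xh) at xh^nu, this forces
   <xs^nu, y - xh^nu> <= - t |xs^nu|^2 < 0.  The unilateral deviation
   (y, xh^{-nu}) belongs to K(xh), and testing the variational inequality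
   against it gives exactly <xs^nu, y - xh^nu> >= 0. *)

From HB Require Import structures.
From mathcomp Require Import all_boot all_order all_algebra.
From mathcomp Require Import all_classical all_reals all_analysis.
Import Order.TTheory GRing.Theory Num.Theory.
Import numFieldNormedType.Exports.
Local Open Scope ring_scope.
Local Open Scope classical_set_scope.

Section InnerProduct.
Context {R : realType} {k : nat}.
Implicit Types u v w : 'rV[R]_k.

Lemma ip0r u : ip u 0 = 0.
Proof. by rewrite /ip big1 // => i _; rewrite mxE mulr0. Qed.

Lemma ipDr u v w : ip u (v + w) = ip u v + ip u w.
Proof. by rewrite /ip -big_split; apply: eq_bigr => i _; rewrite mxE mulrDr. Qed.

Lemma ipZr u v (t : R) : ip u (t *: v) = t * ip u v.
Proof. by rewrite /ip mulr_sumr; apply: eq_bigr => i _; rewrite mxE mulrCA. Qed.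

Lemma ipxx_gt0 u : u != 0 -> 0 < ip u u.
Proof.
move=> u_neq0; have sq_ge0 i : 0 <= u 0 i * u 0 i by rewrite -expr2 sqr_ge0.
rewrite lt0r sumr_ge0 // andbT; apply: contra u_neq0 => /eqP uu0.
apply/eqP/rowP => i; have /eqP := psumr_eq0P (i := i) (fun j _ => sq_ge0 j) uu0 isT.
by rewrite mulf_eq0 orbb mxE => /eqP.
Qed.

Lemma ncone_open_lt0 {A : set 'rV[R]_k} {z zs y : 'rV[R]_k} :
  open A -> A y -> ncone A z zs -> zs != 0 -> ip zs (y - z) < 0.
Proof.
move=> oA Ay [A0|zs_normal] zs_neq0; first by rewrite A0 in Ay.
have /nbhs_ballP [e e_gt0 ballA] : nbhs y A by exact: open_nbhs_nbhs.
pose t := e / (`|zs| + 1).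
have t_gt0 : 0 < t by rewrite divr_gt0 // ltr_pwDr.
have A_shift : A (y + t *: zs).
  apply: ballA; rewrite -ball_normE /ball_ /= opprD addrA subrr add0r normrN.
  rewrite normrZ gtr0_norm // /t -mulrA gtr_pMr // mulrC.
  by rewrite ltr_pdivrMr ?mul1r ?ltrDl // ltr_pwDr.
have shift_le0 := zs_normal _ A_shift.
rewrite addrAC ipDr ipZr in shift_le0.
apply: lt_le_trans shift_le0; rewrite ltrDl; exact: mulr_gt0 t_gt0 (ipxx_gt0 _ zs_neq0).
Qed.

End InnerProduct.

Section UnilateralDeviation.
Context {R : realType} {I : finType} {n : I -> nat}.
Implicit Types (x xs : profile R I n).

Lemma upd_at x nu (y : vec R I n nu) : upd x nu y nu = y.
Proof. exact: dfwith_in. Qed.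

Lemma upd_out x nu (y : vec R I n nu) j : j != nu -> upd x nu y j = x j.
Proof. by rewrite eq_sym; exact: dfwith_out. Qed.

Lemma ipP_upd_sub xs x nu (y : vec R I n nu) :
  ipP xs (fun j => upd x nu y j - x j) = ip (xs nu) (y - x nu).
Proof.
rewrite /ipP (bigD1 nu) //= big1 ?addr0 ?upd_at // => j j_neq.
by rewrite upd_out // subrr ip0r.
Qed.

Lemma Kprod_upd {K : forall nu : I, profile R I n -> set (vec R I n nu)} {x nu}
    {y : vec R I n nu} :
  Kprod K x x -> K nu x y -> Kprod K x (upd x nu y).
Proof.
move=> Kxx Ky j; have [-> | j_neq] := eqVneq j nu; first by rewrite upd_at.
by rewrite upd_out //; exact: Kxx.
Qed.

End UnilateralDeviation.

Theorem theorem1 (R : realType) (I : finType) (n : I -> nat)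
  (X : forall nu : I, set (vec R I n nu))
  (pref : I -> profile R I n -> profile R I n -> Prop)
  (K : forall nu : I, profile R I n -> set (vec R I n nu))
  (K_dep : forall nu (x y : profile R I n),
      (forall j, j != nu -> x j = y j) -> K nu x = K nu y)
  (K_into : forall nu (x : profile R I n), inXminus X nu x -> K nu x `<=` X nu)
  (K_ne : forall nu (x : profile R I n), inXminus X nu x -> K nu x !=set0)
  (U_open : forall nu (x : profile R I n), open (Us pref nu x : set 'rV[R]_(n nu)))
  (xh : profile R I n) :
  inX X xh -> SQVI pref K xh -> GNE pref K xh.
Proof.
move=> _ [Kxx [xs [N0xs vi]]]; split => // nu [y [Ky y_better]].
have [xs_normal /eqP xs_neq0] := N0xs nu.
have := ncone_open_lt0 (U_open nu xh) y_better xs_normal xs_neq0.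
have := vi _ (Kprod_upd Kxx Ky); rewrite ipP_upd_sub.
by rewrite ltNge => ->.
Qed.
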